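(* In the setting of the context, fix $r\in\{0,\dots,d\}$ and assume that in $\Delta$ vertex $r$ is adjacent to exactly one other vertex. Then $a^*_r\ne\theta^*_0$.
   Context: Let $\mathbb F$ be a field, $d\ge1$ an integer, $V$ a vector space over $\mathbb F$ of dimension $d+1$, $\mathcal A=\mathrm{End}(V)$ with identity $I$. Let $E^*_0,\dots,E^*_d\in\mathcal A$ satisfy $E^*_iE^*_j=\delta_{i,j}E^*_i$ and $\mathrm{rank}(E^*_i)=1$ for $0\le i,j\le d$. Let $A\in\mathcal A$ satisfy $E^*_iAE^*_j=0$ if $|i-j|>1$ and $E^*_iAE^*_j\neq0$ if $|i-j|=1$. Assume $A$ has $d+1$ mutually distinct eigenvalues $\theta_0,\dots,\theta_d$ in $\mathbb F$, and let $E_i=\prod_{j\ne i}\frac{A-\theta_jI}{\theta_i-\theta_j}$ be the primitive idempotent of $A$ for $\theta_i$. Let $\theta^*_0,\dots,\theta^*_d\in\mathbb F$ and $A^*=\sum_{i=0}^d\theta^*_iE^*_i$. Define $a^*_i=\mathrm{tr}(E_iA^* )$. Let $\Delta$ be the graph on vertex set $\{0,\dots,d\}$ in which $i,j$ are adjacent iff $i\ne j$ and $E_iA^*E_j\ne0$. *)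

(* V = F^(d+1) realized as square matrices 'M[F]_(d.+1);
   indices 0..d are 'I_d.+1. *)
From HB Require Import structures.
From mathcomp Require Import all_boot all_order all_algebra.
Set Implicit Arguments. Unset Strict Implicit. Unset Printing Implicit Defensive.
Import Order.TTheory GRing.Theory.
Local Open Scope ring_scope.

Definition prim_idem (F : fieldType) (d : nat) (A : 'M[F]_d.+1)
  (theta : 'I_d.+1 -> F) (i : 'I_d.+1) : 'M[F]_d.+1 :=
  \prod_(j < d.+1 | j != i) ((theta i - theta j)^-1 *: (A - (theta j)%:M)).

Definition dual_op (F : fieldType) (d : nat) (Es : 'I_d.+1 -> 'M[F]_d.+1)
  (thetas : 'I_d.+1 -> F) : 'M[F]_d.+1 :=
  \sum_(i < d.+1) thetas i *: Es i.

Definition Delta_adj (F : fieldType) (d : nat) (E : 'I_d.+1 -> 'M[F]_d.+1)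
  (Astar : 'M[F]_d.+1) (i j : 'I_d.+1) : bool :=
  (i != j) && (E i *m Astar *m E j != 0).

From HB Require Import structures.
From mathcomp Require Import all_boot all_order all_algebra.
From mathcomp Require Import zify.
Set Implicit Arguments. Unset Strict Implicit. Unset Printing Implicit Defensive.
Import Order.TTheory GRing.Theory.
Local Open Scope ring_scope.

(* Matrices act on row vectors, so V = 'rV_(d+1).
   1. Rank-one linear algebra: E X E = tr(E X) E for rank E <= 1, a
      cancellation rule for rank-one factors, and the fact that d+1 pairwise
      orthogonal rank-one idempotents in dimension d+1 sum to the identity.
   2. Since A is tridiagonal and irreducible with respect to the E*_i, the
      Krylov vectors A^k E*_0 (k <= d) span V; hence a matrix P with
      P A = t P and P E*_0 = 0 vanishes, and every left eigenspace of A has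
      dimension at most one.
   3. The primitive idempotents E_i form a complete orthogonal system with
      E_i A = theta_i E_i; in particular rank E_r <= 1.
   4. If tr(E_r A* ) = theta*_0, then E_r (A* - theta*_0 I) = E_r A* E_s, and
      since (A* - theta*_0 I) E*_0 = 0 the matrix N = E_r A* E_s satisfies
      N A = theta_s N and N E*_0 = 0.  By 2, N = 0, contradicting that s is
      adjacent to r. *)

Section RankOne.
Variable F : fieldType.

Lemma rank_le1_decomp m n (E : 'M[F]_(m, n)) :
  (\rank E <= 1)%N -> exists (D : 'M[F]_(m, 1)) (w : 'rV[F]_n), E = D *m w.
Proof.
move=> hE; have [->|nz] := eqVneq E 0; first by exists 0, 0; rewrite mul0mx.
have [i hi] : exists i, row i E != 0.
  apply/existsP; apply: contraR nz => /existsPn h.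
  by apply/eqP/row_matrixP => i; rewrite row0; exact/eqP/negPn/h.
have [_ eqE] := mxrank_leqif_sup (row_sub i E).
have : (E <= row i E)%MS.
  by rewrite -eqE rank_rV hi eq_sym eqn_leq hE lt0n mxrank_eq0.
by case/submxP=> D hD; exists D, (row i E).
Qed.

Lemma rank1_sandwich n (E X : 'M[F]_n) :
  (\rank E <= 1)%N -> E *m X *m E = \tr (E *m X) *: E.
Proof.
move=> /rank_le1_decomp [D [w ->]].
have -> : \tr (D *m w *m X) = (w *m X *m D) 0 0.
  by rewrite -mulmxA mxtrace_mulC trace_mx11.
have -> : D *m w *m X *m (D *m w) = D *m (w *m X *m D) *m w by rewrite !mulmxA.
by rewrite {1}[w *m X *m D]mx11_scalar mul_mx_scalar scalemxAl.
Qed.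

(* A rank-one factor B with B C <> 0 can be cancelled: X B C = 0 -> X B = 0,
   because the column space of B then equals that of B C. *)
Lemma rank1_cancel m n p q (B : 'M[F]_(m, n)) (C : 'M[F]_(n, p))
    (X : 'M[F]_(q, m)) :
  (\rank B <= 1)%N -> B *m C != 0 -> X *m B *m C = 0 -> X *m B = 0.
Proof.
move=> hB hBC hX.
have rBC : \rank (B *m C) = \rank B.
  have := mxrankM_maxl B C.
  have : (0 < \rank (B *m C))%N by rewrite lt0n mxrank_eq0.
  lia.
have := mxrank_leqif_sup (submxMl C^T B^T).
rewrite -trmx_mul !mxrank_tr rBC => -[_]; rewrite eqxx => /esym.
rewrite trmx_mul => /submxP [Y hY].
have -> : B = B *m C *m Y^T by rewrite -{1}[B]trmxK hY !trmx_mul !trmxK.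
by rewrite !mulmxA hX !mul0mx.
Qed.

(* If the nonzero rows u_i are biorthogonal to the matrices P_j
   (u_i P_j = [i = j] u_i), they form a basis, so a matrix is determined by
   its action on them. *)
Lemma mx_eq_on_biorthogonal n (u : 'I_n -> 'rV[F]_n) (P : 'I_n -> 'M[F]_n) :
  (forall i, u i != 0) -> (forall i j, u i *m P j = (i == j)%:R *: u i) ->
  forall X Y : 'M[F]_n, (forall i, u i *m X = u i *m Y) -> X = Y.
Proof.
move=> hu hP X Y hXY.
pose U : 'M[F]_n := \matrix_i u i.
have rU i : row i U = u i by rewrite rowK.
have indep (x : 'rV[F]_n) : x *m U = 0 -> x = 0.
  move=> hx; apply/rowP => j; rewrite mxE.
  have : x *m U *m P j = x 0 j *: u j.
    rewrite (mulmx_sum_row x U) mulmx_suml (bigD1 j) //= big1 => [|i hij].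
      by rewrite addr0 rU -scalemxAl hP eqxx scale1r.
    by rewrite rU -scalemxAl hP (negbTE hij) scale0r scaler0.
  rewrite hx mul0mx => /esym/eqP; rewrite scaler_eq0 (negbTE (hu j)) orbF.
  by move/eqP.
have uU : U \in unitmx.
  rewrite -row_free_unit -kermx_eq0; apply/eqP/row_matrixP => i.
  by rewrite row0; apply: indep; rewrite -row_mul mulmx_ker row0.
have hUXY : U *m X = U *m Y by apply/row_matrixP => i; rewrite !row_mul rU hXY.
by rewrite -(mulKmx uU X) hUXY mulKmx.
Qed.

Lemma sum_rank1_idem n (P : 'I_n.+1 -> 'M[F]_n.+1) :
  (forall i j, P i *m P j = if i == j then P i else 0) ->
  (forall i, \rank (P i) = 1%N) ->
  \sum_i P i = 1%:M.
Proof.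
move=> hPP hPr.
pose k i := odflt ord0 [pick k | row k (P i) != 0].
have hk i : row (k i) (P i) != 0.
  rewrite /k; case: pickP => //= h.
  have : P i != 0 by rewrite -mxrank_eq0 hPr.
  by case/negP; apply/eqP/row_matrixP => j; rewrite row0; exact/eqP/negbFE/h.
apply: (@mx_eq_on_biorthogonal _ (fun i => row (k i) (P i)) P) => //.
  move=> i j; rewrite -row_mul hPP; case: eqP => [->|_].
    by rewrite scale1r.
  by rewrite row0 scale0r.
move=> i; rewrite mulmx1 mulmx_sumr (bigD1 i) //= big1 => [|j hj].
  by rewrite -row_mul hPP eqxx addr0.
by rewrite -row_mul hPP eq_sym (negbTE hj) row0.
Qed.

End RankOne.

Section Tridiagonal.
Variables (F : fieldType) (d : nat).
Variables (Es : 'I_d.+1 -> 'M[F]_d.+1) (A : 'M[F]_d.+1).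
Hypothesis hEs_mul : forall i j, Es i *m Es j = if i == j then Es i else 0.
Hypothesis hEs_rank : forall i, \rank (Es i) = 1%N.
Hypothesis hA_far : forall i j : 'I_d.+1,
  ((i.+1 < j) || (j.+1 < i))%N -> Es i *m A *m Es j = 0.
Hypothesis hA_near : forall i j : 'I_d.+1,
  ((i.+1 == j) || (j.+1 == i))%N -> Es i *m A *m Es j != 0.

(* Inserting the resolution of the identity 1 = sum_l E*_l E*_l. *)
Lemma mul_through_Es p q (X : 'M[F]_(p, d.+1)) (Y : 'M[F]_(d.+1, q)) :
  X *m Y = \sum_l (X *m Es l) *m (Es l *m Y).
Proof.
rewrite -{1}(mulmx1 X) -(sum_rank1_idem hEs_mul hEs_rank) mulmx_sumr mulmx_suml.
by apply: eq_bigr => l _; rewrite mulmxA -(mulmxA X (Es l) (Es l)) hEs_mul eqxx.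
Qed.

Lemma far_power k (i j : 'I_d.+1) :
  ((i + k < j) || (j + k < i))%N -> Es i *m A ^+ k *m Es j = 0.
Proof.
elim: k i j => [|k IH] i j hij.
  rewrite expr0 mulmx1 hEs_mul; case: eqP => // eij.
  by move: hij; rewrite eij addn0 ltnn.
rewrite exprS -[A * _]/(A *m A ^+ k) mulmxA -mulmxA mul_through_Es big1 // => l _.
have [hf|hf] : ((i.+1 < l) || (l.+1 < i))%N \/ ((l + k < j) || (j + k < l))%N.
  by move: hij; case: (ltngtP i l) => //; lia.
- by rewrite hA_far // mul0mx.
- by rewrite (mulmxA (Es l)) IH // mulmx0.
Qed.

(* E*_k A^k E*_0 <> 0 for k <= d: it factors as (E*_k A E*_(k-1)) times
   (E*_(k-1) A^(k-1) E*_0), and the rank-one factor E*_(k-1) can be cancelled. *)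
Lemma diag_power_neq0 k : (k <= d)%N -> Es (inord k) *m A ^+ k *m Es ord0 != 0.
Proof.
elim: k => [|k IH] hk.
  have -> : inord 0 = ord0 :> 'I_d.+1 by apply: val_inj; rewrite /= inordK.
  by rewrite expr0 mulmx1 hEs_mul eqxx -mxrank_eq0 hEs_rank.
have hkv : nat_of_ord (inord k : 'I_d.+1) = k by rewrite inordK //; lia.
have hk1v : nat_of_ord (inord k.+1 : 'I_d.+1) = k.+1 by rewrite inordK.
set X := Es (inord k.+1) *m A *m Es (inord k).
have hXE : X *m Es (inord k) = X by rewrite -mulmxA hEs_mul eqxx.
have split_step : Es (inord k.+1) *m A ^+ k.+1 *m Es ord0 =
    X *m (A ^+ k *m Es ord0).
  rewrite exprS -[A * _]/(A *m A ^+ k) mulmxA -mulmxA mul_through_Es.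
  rewrite (bigD1 (inord k)) //= big1 ?addr0; first by rewrite -[in RHS]hXE !mulmxA.
  move=> l hl; have hlk : nat_of_ord l != k.
    by apply: contra hl => /eqP hl; apply/eqP/val_inj; rewrite /= hkv.
  have [hf|hf] : ((k.+2 < l) || (l.+1 < k.+1))%N \/ (0 + k < l)%N by lia.
  - by rewrite hA_far ?mul0mx // hk1v.
  - by rewrite (mulmxA (Es l)) far_power ?mulmx0 // hf orbT.
have hX : X != 0 by apply: hA_near; rewrite hkv hk1v eqxx orbT.
rewrite split_step; apply: contra hX => /eqP hXQ; apply/eqP.
rewrite -hXE; apply: (rank1_cancel (C := A ^+ k *m Es ord0)).
- by rewrite hEs_rank.
- by rewrite mulmxA IH //; lia.
- by rewrite hXE.
Qed.

(* By induction, M E*_j = 0 for every j, since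
   M A^j E*_0 = M E*_j E*_j A^j E*_0 once M E*_l = 0 for l < j. *)
Lemma Krylov_annihilator m (M : 'M[F]_(m, d.+1)) :
  (forall k, (k <= d)%N -> M *m A ^+ k *m Es ord0 = 0) -> M = 0.
Proof.
move=> hM.
have vanish_below k : forall j, (j < k)%N -> (j <= d)%N -> M *m Es (inord j) = 0.
  elim: k => [//|k IH] j hj hjd.
  have [ljk|ejk] : (j < k)%N \/ j = k by lia.
    exact: IH.
  subst j.
  have hkv : nat_of_ord (inord k : 'I_d.+1) = k by rewrite inordK //; lia.
  have := hM k hjd.
  rewrite -mulmxA mul_through_Es (bigD1 (inord k)) //= big1 ?addr0; last first.
    move=> l hl; have hlk : nat_of_ord l != k.
      by apply: contra hl => /eqP hl; apply/eqP/val_inj; rewrite /= hkv.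
    have [hlt|hgt] : (l < k)%N \/ (k < l)%N by lia.
      by rewrite -(inord_val l) IH ?mul0mx //; lia.
    by rewrite (mulmxA (Es l)) far_power ?mulmx0 //= add0n hgt orbT.
  apply: rank1_cancel; first by rewrite hEs_rank.
  by rewrite !mulmxA hEs_mul eqxx; exact: diag_power_neq0.
rewrite -[M]mulmx1 -(sum_rank1_idem hEs_mul hEs_rank) mulmx_sumr big1 // => l _.
by rewrite -(inord_val l); apply: (vanish_below l.+1) => //; rewrite -ltnS.
Qed.

Lemma left_eigen_annihilator m (P : 'M[F]_(m, d.+1)) t :
  P *m A = t *: P -> P *m Es ord0 = 0 -> P = 0.
Proof.
move=> hPA hP0; apply: Krylov_annihilator => k _.
have -> : P *m A ^+ k = t ^+ k *: P.
  elim: k => [|k IH]; first by rewrite !expr0 mulmx1 scale1r.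
  rewrite exprSr -[_ * A]/(A ^+ k *m A) mulmxA IH -scalemxAl hPA scalerA.
  by rewrite -exprSr.
by rewrite -scalemxAl hP0 scaler0.
Qed.

Lemma left_eigen_rank m (P : 'M[F]_(m, d.+1)) t :
  P *m A = t *: P -> (\rank P <= 1)%N.
Proof.
move=> hPA; pose K := kermx (P *m Es ord0).
have hK : K *m P = 0.
  apply: (left_eigen_annihilator (t := t)); last by rewrite -mulmxA mulmx_ker.
  by rewrite -mulmxA hPA scalemxAr.
have := mxrankS (introT sub_kermxP hK); rewrite !mxrank_ker.
have := mxrankM_maxr P (Es ord0); rewrite hEs_rank.
have := rank_leq_row P; lia.
Qed.

End Tridiagonal.

Lemma dual_op_Es (F : fieldType) d (Es : 'I_d.+1 -> 'M[F]_d.+1)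
    (thetas : 'I_d.+1 -> F) i :
  (forall i j, Es i *m Es j = if i == j then Es i else 0) ->
  dual_op Es thetas *m Es i = thetas i *: Es i.
Proof.
move=> hEs_mul; rewrite /dual_op mulmx_suml (bigD1 i) //= big1 ?addr0.
  by rewrite -scalemxAl hEs_mul eqxx.
by move=> j hj; rewrite -scalemxAl hEs_mul (negbTE hj) scaler0.
Qed.

Lemma prod_eig (F : fieldType) n (A : 'M[F]_n.+1) (v : 'rV[F]_n.+1) t
    (I : finType) (Pr : pred I) (c th : I -> F) :
  v *m A = t *: v ->
  v *m (\prod_(l | Pr l) (c l *: (A - (th l)%:M))) =
  (\prod_(l | Pr l) (c l * (t - th l))) *: v.
Proof.
move=> hv.
apply: (big_rec2 (fun x (M : 'M[F]_n.+1) => v *m M = x *: v)).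
  by rewrite mulmx1 scale1r.
move=> i y1 y2 _ IH.
have -> : c i *: (A - (th i)%:M) * y2 = c i *: (A - (th i)%:M) *m y2 by [].
rewrite mulmxA -scalemxAr mulmxBr hv mul_mx_scalar -scalerBl scalerA.
by rewrite -scalemxAl IH scalerA.
Qed.

Section PrimitiveIdempotents.
Variables (F : fieldType) (d : nat) (A : 'M[F]_d.+1) (theta : 'I_d.+1 -> F).
Hypothesis htheta_inj : injective theta.
Hypothesis htheta_eig : forall i, eigenvalue A (theta i).
Local Notation E := (prim_idem A theta).

Lemma prim_idem_eigvec i j (v : 'rV[F]_d.+1) :
  v *m A = theta i *: v -> v *m E j = (i == j)%:R *: v.
Proof.
move=> hv; rewrite /prim_idem (prod_eig _ _ _ hv); congr (_ *: _).
case: eqP => [<-|/eqP nij]; last by rewrite (bigD1 i) //= subrr mulr0 mul0r.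
apply: big1 => l hl; rewrite mulVf // subr_eq0.
by apply: contra hl => /eqP /htheta_inj ->.
Qed.

(* Eigenvectors for the d+1 distinct eigenvalues form a basis, so matrices
   agreeing on all eigenvectors of A are equal. *)
Lemma prim_idem_ext (X Y : 'M[F]_d.+1) :
  (forall i (v : 'rV[F]_d.+1), v *m A = theta i *: v -> v *m X = v *m Y) ->
  X = Y.
Proof.
move=> hXY.
have [v hv] : exists v : 'I_d.+1 -> 'rV[F]_d.+1,
    forall i, v i *m A = theta i *: v i /\ v i != 0.
  apply: (fin_all_exists (P := fun i w => w *m A = theta i *: w /\ w != 0)).
  by move=> i; have /eigenvalueP [w hw1 hw2] := htheta_eig i; exists w.
apply: (@mx_eq_on_biorthogonal _ _ v E) => [i|i j|i].
- exact: (hv i).2.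
- exact: prim_idem_eigvec (hv i).1.
- exact: hXY (hv i).1.
Qed.

Lemma prim_idem_mul i j : E i *m E j = if i == j then E i else 0.
Proof.
apply: prim_idem_ext => k v hv.
rewrite mulmxA (prim_idem_eigvec _ hv) -scalemxAl (prim_idem_eigvec _ hv).
have [eik|nik] := eqVneq i k; last first.
  rewrite scale0r; case: ifP => _; last by rewrite mulmx0.
  by rewrite (prim_idem_eigvec _ hv) eq_sym (negbTE nik) scale0r.
subst k; rewrite scale1r; have [_|_] := eqVneq i j.
  by rewrite (prim_idem_eigvec _ hv) eqxx.
by rewrite scale0r mulmx0.
Qed.

Lemma prim_idem_sum : \sum_j E j = 1%:M.
Proof.
apply: prim_idem_ext => i v hv; rewrite mulmx1 mulmx_sumr (bigD1 i) //=.
rewrite big1 => [|j hj]; first by rewrite (prim_idem_eigvec _ hv) eqxx scale1r addr0.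
by rewrite (prim_idem_eigvec _ hv) eq_sym (negbTE hj) scale0r.
Qed.

Lemma prim_idem_A i : E i *m A = theta i *: E i.
Proof.
apply: prim_idem_ext => k v hv.
rewrite mulmxA (prim_idem_eigvec _ hv) -scalemxAl hv -scalemxAr (prim_idem_eigvec _ hv).
rewrite !scalerA; case: (eqVneq k i) => [->|_]; first by rewrite mulrC.
by rewrite mulr0n mul0r mulr0.
Qed.

End PrimitiveIdempotents.

Lemma single_neighbour_row (F : fieldType) n (E : 'I_n.+1 -> 'M[F]_n.+1)
    (X : 'M[F]_n.+1) (r s : 'I_n.+1) :
  (forall i j, E i *m E j = if i == j then E i else 0) ->
  \sum_j E j = 1%:M -> (\rank (E r) <= 1)%N -> r != s ->
  (forall j, j != s -> j != r -> E r *m X *m E j = 0) ->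
  E r *m (X - (\tr (E r *m X))%:M) = E r *m X *m E s.
Proof.
move=> hEE hsum hrank hrs hzero.
rewrite -[LHS]mulmx1 -hsum mulmx_sumr (bigD1 s) //= big1 ?addr0 => [|j hjs];
  rewrite mulmxBr mulmxBl mul_mx_scalar -scalemxAl hEE.
  by rewrite (negbTE hrs) scaler0 subr0.
have [<-|hrj] := eqVneq r j; first by rewrite /= rank1_sandwich // subrr.
by rewrite /= scaler0 subr0 hzero // eq_sym.
Qed.

Theorem lemma7p12 (F : fieldType) (d : nat) (hd : (0 < d)%N)
  (Es : 'I_d.+1 -> 'M[F]_d.+1) (A : 'M[F]_d.+1)
  (theta thetas : 'I_d.+1 -> F) (r : 'I_d.+1)
  (hEs_mul : forall i j : 'I_d.+1,
      Es i *m Es j = if i == j then Es i else 0)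
  (hEs_rank : forall i : 'I_d.+1, \rank (Es i) = 1%N)
  (hA_far : forall i j : 'I_d.+1,
      ((i.+1 < j) || (j.+1 < i))%N -> Es i *m A *m Es j = 0)
  (hA_near : forall i j : 'I_d.+1,
      ((i.+1 == j) || (j.+1 == i))%N -> Es i *m A *m Es j != 0)
  (htheta_inj : injective theta)
  (htheta_eig : forall i : 'I_d.+1, eigenvalue A (theta i))
  (hr : #|[set j : 'I_d.+1 |
           Delta_adj (prim_idem A theta) (dual_op Es thetas) r j]| = 1%N) :
  \tr (prim_idem A theta r *m dual_op Es thetas) != thetas ord0.
Proof.
set E := prim_idem A theta; set As := dual_op Es thetas.
have [s hs] : exists s, [set j | Delta_adj E As r j] = [set s].
  exact/cards1P/eqP.
have adj j : Delta_adj E As r j = (j == s) by rewrite -in_set1 -hs inE.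
have /andP [hrs hN] : Delta_adj E As r s by rewrite adj.
have hrank := left_eigen_rank hEs_mul hEs_rank hA_far hA_near
  (prim_idem_A htheta_inj htheta_eig r).
have hrow := single_neighbour_row (X := As) (prim_idem_mul htheta_inj htheta_eig)
  (prim_idem_sum htheta_inj htheta_eig) hrank hrs.
(* If a*_r = theta*_0, then E_r A* E_s is an eigenmatrix killed by E*_0. *)
apply: contra hN => /eqP htr; apply/eqP.
apply: (left_eigen_annihilator hEs_mul hEs_rank hA_far hA_near (t := theta s)).
  by rewrite -mulmxA prim_idem_A // scalemxAr.
rewrite -hrow => [|j hjs hjr]; last first.
  have := adj j; rewrite /Delta_adj (negbTE hjs) (eq_sym r) hjr /=.
  by move/negbT/negPn/eqP.
by rewrite htr -mulmxA mulmxBl dual_op_Es // mul_scalar_mx subrr mulmx0.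
Qed.
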